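(* Consider the binary sequential learning model described in the context with signal accuracy $p\in(1/2,1)$. Let $\alpha=(1-p)/p$ and, for each integer $k\ge 2$, let $$v_k=\frac{1-\alpha^{\frac{k-2}{k-1}}}{1-\alpha^{\frac{k-2}{k-1}}+\alpha^{\frac{-1}{k-1}}-\alpha},\qquad \varepsilon_k=\log\frac{1-v_k}{v_k}.$$ Suppose that, subject to privacy budget $\varepsilon$, agents employ the randomized response strategy with flip probability $u(\varepsilon)=\frac{1}{1+e^{\varepsilon}}$ before a cascade. Then for $\varepsilon\in(\varepsilon_{k+1},\varepsilon_k]$ the information cascade threshold $k(\varepsilon)$ does not change (it equals $k$), and on this interval the probability of a correct cascade is increasing in $\varepsilon$.
   Context: Binary model: unknown state $\theta\in\{-1,+1\}$ with uniform prior; agents $n=1,2,\dots$ act in sequence; agent $n$ privately observes $s_n\in\{-1,+1\}$, i.i.d. given $\theta$ with $\mathbb{P}(s_n=\theta\mid\theta)=p$. Before a cascade, agent $n$'s intended action equals her signal, $a_n=s_n$, and she publicly reports $x_n=a_n$ with probability $1-u(\varepsilon)$ and $x_n=-a_n$ with probability $u(\varepsilon)$. Let $\rho(\varepsilon)=\frac{(1-u(\varepsilon))(1-p)+u(\varepsilon)p}{u(\varepsilon)(1-p)+p(1-u(\varepsilon))}$. The information cascade threshold is the integer $k(\varepsilon)=\lfloor\log_{\rho(\varepsilon)}\frac{1-p}{p}\rfloor+1$: it is the value of the difference between the number of $+1$ and $-1$ reports in the public history at which agents become indifferent to their private signals. An information cascade starts at the first agent whose observed history has (number of $+1$ reports)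 $-$ (number of $-1$ reports) equal to $+k(\varepsilon)$ or $-k(\varepsilon)$; from then on every agent takes and truthfully reports the action favored by the history ($+1$ or $-1$ respectively). The cascade is correct if this action equals $\theta$; the probability of a correct cascade is the probability of this event. *)

From Stdlib Require Import Reals ZArith Lra.
From Coquelicot Require Import Coquelicot.
Open Scope R_scope.

Definition flip_prob (eps : R) : R := 1 / (1 + exp eps).

Definition rho (p eps : R) : R :=
  let u := flip_prob eps in
  ((1 - u) * (1 - p) + u * p) / (u * (1 - p) + p * (1 - u)).

Definition logb (b x : R) : R := ln x / ln b.

Definition cascade_threshold (p eps : R) : Z :=
  (Int_part (logb (rho p eps) ((1 - p) / p)) + 1)%Z.

Definition alpha (p : R) : R := (1 - p) / p.

Definition v_k (p : R) (k : nat) : R :=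
  let a := alpha p in
  let t := Rpower a ((INR k - 2) / (INR k - 1)) in
  (1 - t) / (1 - t + Rpower a (-1 / (INR k - 1)) - a).

(* eps_k = log((1-v_k)/v_k), as an extended real: for k = 2 one has
   v_2 = 0 and eps_2 = log(1/0) = +oo; for k >= 3, 0 < v_k < 1. *)
Definition eps_k (p : R) (k : nat) : Rbar :=
  if Req_EM_T (v_k p k) 0 then p_infty
  else Finite (ln ((1 - v_k p k) / v_k p k)).

(* Pre-cascade public walk of D = (#reports equal to one fixed value) minus
   (#reports of the other value), started at d, moving +1 with probability q
   and -1 with probability 1-q, absorbed at +K and -K.
   [reach q K s n d] is the probability that it is absorbed at s*K (s = +1 or
   -1) within n further steps. *)
Fixpoint reach (q : R) (K s : Z) (n : nat) (d : Z) : R :=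
  if Z.eqb d (s * K)%Z then 1
  else if Z.eqb d (- (s * K))%Z then 0
  else match n with
       | O => 0
       | S n' => q * reach q K s n' (d + 1)%Z + (1 - q) * reach q K s n' (d - 1)%Z
       end.

(* Probability of a correct cascade, under randomized response with privacy
   budget eps: theta uniform on {-1,+1}; given theta, each pre-cascade report
   x_n is +1 with probability
     P(x_n = +1 | theta = +1) = p (1-u) + (1-p) u,
     P(x_n = +1 | theta = -1) = (1-p)(1-u) + p u,
   and the cascade is correct iff the difference of reports first reaches
   theta * k(eps).  The probability is the limit of the finite-horizon
   probabilities (the sequence is nondecreasing and bounded by 1). *)
Definition correct_cascade_prob (p eps : R) : R :=
  let u := flip_prob eps in
  let K := cascade_threshold p eps in
  / 2 * real (Lim_seq (fun n => reach (p * (1 - u) + (1 - p) * u) K 1 n 0))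
  + / 2 * real (Lim_seq (fun n => reach ((1 - p) * (1 - u) + p * u) K (-1) n 0)).

Definition in_interval (p : R) (k : nat) (eps : R) : Prop :=
  Rbar_lt (eps_k p (S k)) (Finite eps) /\ Rbar_le (Finite eps) (eps_k p k).

(* Before a cascade the public difference of reports is a random walk that moves
   towards theta with probability q = p (1 - u) + (1 - p) u, and rho = (1 - q) / q.
   A correct cascade is absorption of this walk at theta k before -theta k, which by
   gambler's ruin has probability 1 / (1 + rho^k).  The threshold floor(log_rho alpha) + 1
   equals k exactly when alpha^(1/(k-1)) <= rho < alpha^(1/k), and v_k is the flip
   probability at which rho = alpha^(1/(k-1)), eps_k the budget at which u(eps) = v_k.
   As rho increases with u and u decreases with eps, on (eps_{k+1}, eps_k] the threshold
   stays k while rho decreases, so 1 / (1 + rho^k) increases. *)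

From Stdlib Require Import Reals ZArith Bool Lra Lia.
From Coquelicot Require Import Coquelicot.
Open Scope R_scope.

Definition odds (x : R) : R := (1 - x) / x.

Lemma odds_pos x : 0 < x < 1 -> 0 < odds x.
Proof. intros Hx; unfold odds; apply Rdiv_lt_0_compat; lra. Qed.

Lemma odds_decreasing x y : 0 < x -> x < y -> odds y < odds x.
Proof.
  intros Hx Hxy; unfold odds, Rdiv.
  rewrite !Rmult_minus_distr_r, !Rmult_1_l, !Rinv_r by lra.
  apply Rinv_lt_contravar in Hxy; nra.
Qed.

Lemma odds_inv c : c <> -1 -> odds (/ (1 + c)) = c.
Proof. intros Hc; unfold odds; field; intros H; apply Hc; lra. Qed.

Lemma reach_S q K s n d :
  reach q K s (S n) d =
  if Z.eqb d (s * K) then 1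
  else if Z.eqb d (- (s * K)) then 0
  else q * reach q K s n (d + 1) + (1 - q) * reach q K s n (d - 1).
Proof. reflexivity. Qed.

Lemma reach_opp q K n d : reach q K (-1) n d = reach (1 - q) K 1 n (- d).
Proof.
  revert d; induction n as [|n IH]; intros d;
    assert (Etop : Z.eqb d (-1 * K) = Z.eqb (- d) (1 * K))
      by (apply eq_true_iff_eq; rewrite !Z.eqb_eq; lia);
    assert (Ebot : Z.eqb d (- (-1 * K)) = Z.eqb (- d) (- (1 * K)))
      by (apply eq_true_iff_eq; rewrite !Z.eqb_eq; lia).
  - cbn [reach]; rewrite Etop, Ebot; reflexivity.
  - rewrite !reach_S, Etop, Ebot, !IH.
    replace (- (d + 1))%Z with (- d - 1)%Z by lia.
    replace (- (d - 1))%Z with (- d + 1)%Z by lia.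
    destruct (Z.eqb (- d) (1 * K)), (Z.eqb (- d) (- (1 * K))); ring.
Qed.

Section Absorption.

Variables (q : R) (K s : Z).
Hypothesis q_prob : 0 <= q <= 1.

Lemma reach_bounds n d : 0 <= reach q K s n d <= 1.
Proof.
  revert d; induction n as [|n IH]; intros d.
  - simpl; destruct (Z.eqb _ _); [lra|]; destruct (Z.eqb _ _); lra.
  - rewrite reach_S; destruct (Z.eqb _ _); [lra|]; destruct (Z.eqb _ _); [lra|].
    pose proof (IH (d + 1)%Z); pose proof (IH (d - 1)%Z); nra.
Qed.

Lemma reach_le_S n d : reach q K s n d <= reach q K s (S n) d.
Proof.
  revert d; induction n as [|n IH]; intros d.
  - cbn [reach]; destruct (Z.eqb _ _); [lra|]; destruct (Z.eqb _ _); [lra|].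
    pose proof (reach_bounds 0 (d + 1)); pose proof (reach_bounds 0 (d - 1)); simpl in *; nra.
  - rewrite (reach_S q K s (S n)), (reach_S q K s n).
    destruct (Z.eqb _ _); [lra|]; destruct (Z.eqb _ _); [lra|].
    pose proof (IH (d + 1)%Z); pose proof (IH (d - 1)%Z); nra.
Qed.

Definition absorption_prob d : R := real (Lim_seq (fun n => reach q K s n d)).

Lemma absorption_prob_is_lim d :
  is_lim_seq (fun n => reach q K s n d) (absorption_prob d).
Proof.
  apply Lim_seq_correct', (ex_finite_lim_seq_incr _ 1).
  - intros n; apply reach_le_S.
  - intros n; apply reach_bounds.
Qed.

Lemma absorption_prob_rec d : d <> (s * K)%Z -> d <> (- (s * K))%Z ->
  absorption_prob d = q * absorption_prob (d + 1) + (1 - q) * absorption_prob (d - 1).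
Proof.
  intros Htop Hbot.
  assert (Hlim : is_lim_seq (fun n => reach q K s (S n) d)
                   (q * absorption_prob (d + 1) + (1 - q) * absorption_prob (d - 1))).
  { apply (is_lim_seq_ext (fun n => q * reach q K s n (d + 1) + (1 - q) * reach q K s n (d - 1))).
    - intros n; rewrite reach_S; apply Z.eqb_neq in Htop, Hbot; rewrite Htop, Hbot; reflexivity.
    - apply is_lim_seq_plus';
        apply (is_lim_seq_scal_l _ _ (Finite _)), absorption_prob_is_lim. }
  pose proof (absorption_prob_is_lim d) as Hd; apply is_lim_seq_incr_1 in Hd.
  apply is_lim_seq_unique in Hd, Hlim; rewrite Hd in Hlim; injection Hlim; auto.
Qed.

Lemma absorption_prob_top : absorption_prob (s * K) = 1.
Proof.
  unfold absorption_prob; rewrite (Lim_seq_ext _ (fun _ => 1)), Lim_seq_const; [reflexivity|].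
  intros [|n]; cbn [reach]; rewrite Z.eqb_refl; reflexivity.
Qed.

Lemma absorption_prob_bot : (s * K <> 0)%Z -> absorption_prob (- (s * K)) = 0.
Proof.
  intros HK; unfold absorption_prob.
  rewrite (Lim_seq_ext _ (fun _ => 0)), Lim_seq_const; [reflexivity|].
  assert (Hne : Z.eqb (- (s * K)) (s * K) = false) by (apply Z.eqb_neq; lia).
  intros [|n]; cbn [reach]; rewrite Hne, Z.eqb_refl; reflexivity.
Qed.

End Absorption.

Lemma gamblers_ruin (h : nat -> R) (q : R) (K : nat) :
  0 < q < 1 -> h O = 0 -> h (K + K)%nat = 1 ->
  (forall j, (S j < K + K)%nat -> h (S j) = q * h (S (S j)) + (1 - q) * h j) ->
  h K = / (1 + odds q ^ K).
Proof.
  intros Hq h0 h2K Hrec.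
  set (r := odds q); set (D := fun j => h (S j) - h j).
  assert (step : forall j, (S j < K + K)%nat -> D (S j) = r * D j).
  { intros j Hj; pose proof (Hrec j Hj); unfold D, r, odds; field_simplify_eq; lra. }
  assert (shift : forall n j, (j + n < K + K)%nat -> D (j + n)%nat = r ^ n * D j).
  { induction n as [|n IH]; intros j Hj.
    - rewrite Nat.add_0_r; ring.
    - rewrite Nat.add_succ_r, step, IH by lia; simpl; ring. }
  (* The increments grow geometrically, so the upper half of the path is the lower
     half scaled by r^K; at j = K this reads 1 - h K = r^K h K. *)
  assert (upper : forall j, (j <= K)%nat -> h (K + j)%nat - h K = r ^ K * h j).
  { induction j as [|j IH]; intros Hj.
    - rewrite Nat.add_0_r, h0; ring.
    - replace (h (K + S j)%nat - h K) with (D (K + j)%nat + (h (K + j)%nat - h K))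
        by (unfold D; rewrite Nat.add_succ_r; ring).
      rewrite IH, (Nat.add_comm K j), shift by lia; unfold D; ring. }
  assert (r_pos : 0 < r ^ K) by (apply pow_lt; unfold r, odds; apply Rdiv_lt_0_compat; lra).
  pose proof (upper K (le_n K)) as E; rewrite h2K in E.
  apply (Rmult_eq_reg_r (1 + r ^ K)); [|lra].
  rewrite Rinv_l by lra; lra.
Qed.

Lemma absorption_prob_from_0 q K : 0 < q < 1 -> (1 <= K)%nat ->
  absorption_prob q (Z.of_nat K) 1 0 = / (1 + odds q ^ K).
Proof.
  intros Hq HK; set (L := absorption_prob q (Z.of_nat K) 1).
  replace 0%Z with (Z.of_nat K - Z.of_nat K)%Z by lia.
  apply (gamblers_ruin (fun j => L (Z.of_nat j - Z.of_nat K)%Z)); [exact Hq | ..].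
  - replace (Z.of_nat 0 - Z.of_nat K)%Z with (- (1 * Z.of_nat K))%Z by lia.
    apply absorption_prob_bot; lia.
  - replace (Z.of_nat (K + K) - Z.of_nat K)%Z with (1 * Z.of_nat K)%Z by lia.
    apply absorption_prob_top.
  - intros j Hj.
    replace (Z.of_nat (S (S j)) - Z.of_nat K)%Z with (Z.of_nat (S j) - Z.of_nat K + 1)%Z by lia.
    replace (Z.of_nat j - Z.of_nat K)%Z with (Z.of_nat (S j) - Z.of_nat K - 1)%Z by lia.
    apply absorption_prob_rec; lra || lia.
Qed.

Lemma pow_lt_pow_l x y n : 0 <= x < y -> (1 <= n)%nat -> x ^ n < y ^ n.
Proof.
  intros Hxy Hn; destruct n as [|n]; [lia|]; simpl.
  pose proof (pow_incr x y n ltac:(lra)); pose proof (pow_lt y n ltac:(lra)); nra.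
Qed.

Lemma Int_part_logb r a n : 0 < r < 1 -> r ^ S n < a <= r ^ n ->
  Int_part (logb r a) = Z.of_nat n.
Proof.
  intros Hr [Hlo Hhi].
  assert (Ha : 0 < a) by (pose proof (pow_lt r (S n)); lra).
  apply ln_increasing in Hlo; [|apply pow_lt; lra].
  apply ln_le in Hhi; [|exact Ha].
  rewrite ln_pow in Hlo, Hhi by lra; rewrite S_INR in Hlo.
  assert (Hln : ln r < 0) by (rewrite <- ln_1; apply ln_increasing; lra).
  assert (Hdiv : logb r a * ln r = ln a) by (unfold logb; field; lra).
  symmetry; apply Int_part_spec; rewrite <- INR_IZR_INZ; split; nra.
Qed.

Definition root (n : nat) (x : R) : R := Rpower x (/ INR n).

Lemma root_pow n x : (1 <= n)%nat -> 0 < x -> root n x ^ n = x.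
Proof.
  intros Hn Hx; unfold root.
  rewrite <- Rpower_pow by apply exp_pos.
  rewrite Rpower_mult, Rinv_l, Rpower_1 by (assumption || (apply not_0_INR; lia)).
  reflexivity.
Qed.

Lemma root_bounds n x : (1 <= n)%nat -> 0 < x < 1 -> x <= root n x < 1.
Proof.
  intros Hn Hx; pose proof (root_pow n x Hn ltac:(lra)) as Hpow.
  assert (Hpos : 0 < root n x) by apply exp_pos.
  assert (Hlt1 : root n x < 1).
  { apply Rnot_le_lt; intros Hge.
    pose proof (pow_incr 1 (root n x) n ltac:(lra)); rewrite pow1 in *; lra. }
  split; [|exact Hlt1].
  destruct n as [|n]; [lia|]; simpl in Hpow.
  pose proof (pow_incr (root (S n) x) 1 n ltac:(lra)); rewrite pow1 in *; nra.
Qed.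

Lemma flip_prob_bounds e : 0 < flip_prob e < 1.
Proof.
  unfold flip_prob; pose proof (exp_pos e).
  split; [apply Rdiv_lt_0_compat; lra|].
  apply (Rmult_lt_reg_r (1 + exp e)); [lra|]; field_simplify; lra.
Qed.

Lemma flip_prob_decreasing e1 e2 : e1 < e2 -> flip_prob e2 < flip_prob e1.
Proof.
  intros H; apply exp_increasing in H; pose proof (exp_pos e1).
  unfold flip_prob, Rdiv; rewrite !Rmult_1_l; apply Rinv_lt_contravar; nra.
Qed.

Lemma flip_prob_ln_odds_inv v : 0 < v < 1 -> flip_prob (ln ((1 - v) / v)) = v.
Proof.
  intros Hv; unfold flip_prob; rewrite exp_ln by (apply Rdiv_lt_0_compat; lra).
  field; lra.
Qed.

Definition report_accuracy (p u : R) : R := p * (1 - u) + (1 - p) * u.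

Lemma report_accuracy_bounds p u : 0 < p < 1 -> 0 <= u <= 1 ->
  0 < report_accuracy p u < 1.
Proof. intros Hp Hu; unfold report_accuracy; split; nra. Qed.

Lemma report_accuracy_decreasing p u1 u2 : 1 / 2 < p -> u1 < u2 ->
  report_accuracy p u2 < report_accuracy p u1.
Proof. intros Hp Hu; unfold report_accuracy; nra. Qed.

Lemma odds_report_accuracy_lt p u1 u2 : 1 / 2 < p < 1 -> 0 <= u1 -> u1 < u2 <= 1 ->
  odds (report_accuracy p u1) < odds (report_accuracy p u2).
Proof.
  intros Hp Hu1 Hu2; apply odds_decreasing.
  - apply report_accuracy_bounds; lra.
  - apply report_accuracy_decreasing; lra.
Qed.

Lemma rho_odds p e : rho p e = odds (report_accuracy p (flip_prob e)).
Proof. unfold rho, odds, report_accuracy; cbv zeta; f_equal; ring. Qed.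

Lemma rho_pos p e : 0 < p < 1 -> 0 < rho p e.
Proof.
  intros Hp; pose proof (flip_prob_bounds e).
  rewrite rho_odds; apply odds_pos, report_accuracy_bounds; lra.
Qed.

Lemma rho_decreasing p e1 e2 : 1 / 2 < p < 1 -> e1 < e2 -> rho p e2 < rho p e1.
Proof.
  intros Hp He; pose proof (flip_prob_bounds e2); pose proof (flip_prob_bounds e1).
  rewrite !rho_odds; apply odds_report_accuracy_lt; [lra | lra |].
  split; [apply flip_prob_decreasing, He | lra].
Qed.

Lemma correct_cascade_prob_threshold p e K : 0 < p < 1 -> (1 <= K)%nat ->
  cascade_threshold p e = Z.of_nat K -> correct_cascade_prob p e = / (1 + rho p e ^ K).
Proof.
  intros Hp HK HKe; unfold correct_cascade_prob; cbv zeta; rewrite HKe, rho_odds.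
  (* Mirrored, the walk under theta = -1 is the walk under theta = +1. *)
  rewrite (Lim_seq_ext _ _ (fun n => reach_opp _ _ n 0)); cbn [Z.opp].
  replace (1 - ((1 - p) * (1 - flip_prob e) + p * flip_prob e))
    with (report_accuracy p (flip_prob e)) by (unfold report_accuracy; ring).
  change (p * (1 - flip_prob e) + (1 - p) * flip_prob e)
    with (report_accuracy p (flip_prob e)).
  set (q := report_accuracy p (flip_prob e)).
  assert (Hq : 0 < q < 1) by (apply report_accuracy_bounds; pose proof (flip_prob_bounds e); lra).
  change (real (Lim_seq (fun n => reach q (Z.of_nat K) 1 n 0)))
    with (absorption_prob q (Z.of_nat K) 1 0).
  rewrite absorption_prob_from_0 by assumption.
  lra.
Qed.

Lemma alpha_bounds p : 1 / 2 < p < 1 -> 0 < alpha p < 1.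
Proof.
  intros Hp; unfold alpha; split; [apply Rdiv_lt_0_compat; lra|].
  apply (Rmult_lt_reg_r p); [lra|]; field_simplify; lra.
Qed.

Lemma v_k_root p m : 1 / 2 < p < 1 -> (1 <= m)%nat ->
  v_k p (S m) = (p - / (1 + root m (alpha p))) / (2 * p - 1).
Proof.
  intros Hp Hm; pose proof (alpha_bounds p Hp) as Ha.
  assert (Hm' : 0 < INR m) by (apply lt_0_INR; lia).
  unfold v_k; cbv zeta; rewrite S_INR.
  replace ((INR m + 1 - 2) / (INR m + 1 - 1)) with (1 + - / INR m) by (field; lra).
  replace (-1 / (INR m + 1 - 1)) with (- / INR m) by (field; lra).
  rewrite Rpower_plus, !Rpower_Ropp, Rpower_1 by lra; fold (root m (alpha p)).
  pose proof (root_bounds m (alpha p) Hm Ha) as Hc.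
  unfold alpha in *; set (c := root m ((1 - p) / p)) in *.
  assert (0 < c) by lra.
  field; repeat split; nra.
Qed.

Lemma report_accuracy_v_k p m : 1 / 2 < p < 1 -> (1 <= m)%nat ->
  report_accuracy p (v_k p (S m)) = / (1 + root m (alpha p)).
Proof.
  intros Hp Hm; pose proof (root_bounds m (alpha p) Hm (alpha_bounds p Hp)).
  pose proof (alpha_bounds p Hp).
  rewrite v_k_root by assumption; unfold report_accuracy; field; lra.
Qed.

Lemma v_k_bounds p m : 1 / 2 < p < 1 -> (1 <= m)%nat -> 0 <= v_k p (S m) < 1.
Proof.
  intros Hp Hm; pose proof (root_bounds m (alpha p) Hm (alpha_bounds p Hp)) as Hc.
  assert (Ha : alpha p * p = 1 - p) by (unfold alpha; field; lra).
  pose proof (alpha_bounds p Hp).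
  rewrite v_k_root by assumption; set (c := root m (alpha p)) in *.
  assert (Hpc : 1 - p <= p * c) by nra.
  assert (Hi : / (1 + c) * (1 + c) = 1) by (field; lra).
  assert (Hd : / (2 * p - 1) * (2 * p - 1) = 1) by (field; lra).
  pose proof (Rinv_0_lt_compat (1 + c) ltac:(lra)).
  pose proof (Rinv_0_lt_compat (2 * p - 1) ltac:(lra)).
  unfold Rdiv; split; nra.
Qed.

Lemma in_interval_flip_prob p m e : 1 / 2 < p < 1 -> (1 <= m)%nat ->
  in_interval p (S m) e -> v_k p (S m) <= flip_prob e < v_k p (S (S m)).
Proof.
  intros Hp Hm [Hlo Hhi]; unfold eps_k in Hlo, Hhi.
  pose proof (v_k_bounds p m Hp Hm); pose proof (v_k_bounds p (S m) Hp ltac:(lia)).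
  pose proof (flip_prob_bounds e).
  split.
  - destruct (Req_EM_T (v_k p (S m)) 0) as [E|E]; [lra|]; simpl in Hhi.
    rewrite <- (flip_prob_ln_odds_inv (v_k p (S m))) by lra.
    destruct Hhi as [Hlt|Heq]; [apply Rlt_le, flip_prob_decreasing, Hlt | rewrite Heq; lra].
  - destruct (Req_EM_T (v_k p (S (S m))) 0) as [E|E]; simpl in Hlo; [contradiction|].
    rewrite <- (flip_prob_ln_odds_inv (v_k p (S (S m)))) by lra.
    apply flip_prob_decreasing, Hlo.
Qed.

Lemma rho_in_interval p m e : 1 / 2 < p < 1 -> (1 <= m)%nat ->
  in_interval p (S m) e -> root m (alpha p) <= rho p e < root (S m) (alpha p).
Proof.
  intros Hp Hm He.
  pose proof (in_interval_flip_prob p m e Hp Hm He) as [Hlo Hhi].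
  pose proof (v_k_bounds p m Hp Hm); pose proof (v_k_bounds p (S m) Hp ltac:(lia)).
  pose proof (root_bounds m (alpha p) Hm (alpha_bounds p Hp)).
  pose proof (root_bounds (S m) (alpha p) ltac:(lia) (alpha_bounds p Hp)).
  pose proof (alpha_bounds p Hp).
  rewrite <- (odds_inv (root m (alpha p))), <- (odds_inv (root (S m) (alpha p))) by lra.
  rewrite <- !report_accuracy_v_k, rho_odds by (assumption || lia).
  split.
  - destruct Hlo as [Hlt|Heq]; [|rewrite Heq; lra].
    apply Rlt_le, odds_report_accuracy_lt; lra.
  - apply odds_report_accuracy_lt; lra.
Qed.

Lemma cascade_threshold_in_interval p m e : 1 / 2 < p < 1 -> (1 <= m)%nat ->
  in_interval p (S m) e -> cascade_threshold p e = Z.of_nat (S m).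
Proof.
  intros Hp Hm He; pose proof (rho_in_interval p m e Hp Hm He) as [Hlo Hhi].
  pose proof (alpha_bounds p Hp) as Ha.
  pose proof (root_bounds m (alpha p) Hm Ha).
  pose proof (root_bounds (S m) (alpha p) ltac:(lia) Ha).
  unfold cascade_threshold; fold (alpha p).
  rewrite (Int_part_logb (rho p e) (alpha p) m); [lia | lra | split].
  - rewrite <- (root_pow (S m) (alpha p)) by (lia || lra).
    apply pow_lt_pow_l; lra || lia.
  - rewrite <- (root_pow m (alpha p)) at 1 by (lia || lra).
    apply pow_incr; lra.
Qed.

Theorem theorem2 (p : R) (k : nat) :
  1 / 2 < p < 1 -> (2 <= k)%nat ->
  (forall eps : R, in_interval p k eps -> cascade_threshold p eps = Z.of_nat k) /\
  (forall eps1 eps2 : R, in_interval p k eps1 -> in_interval p k eps2 ->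
     eps1 < eps2 -> correct_cascade_prob p eps1 < correct_cascade_prob p eps2).
Proof.
  intros Hp Hk; destruct k as [|m]; [lia|]; assert (Hm : (1 <= m)%nat) by lia.
  split.
  - intros e He; exact (cascade_threshold_in_interval p m e Hp Hm He).
  - intros e1 e2 He1 He2 H12.
    rewrite !(correct_cascade_prob_threshold p _ (S m)) by
      (lra || lia || (apply cascade_threshold_in_interval; assumption)).
    pose proof (rho_decreasing p e1 e2 Hp H12); pose proof (rho_pos p e2 ltac:(lra)).
    pose proof (pow_lt_pow_l (rho p e2) (rho p e1) (S m) ltac:(lra) ltac:(lia)).
    pose proof (pow_lt (rho p e2) (S m) ltac:(lra)).
    apply Rinv_lt_contravar; nra.
Qed.
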